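(* Let $\Gamma$ be a simple graph on a finite set $X$ with $|X|\ge3$. If for some point $x\in X$ the graph $\Gamma^x$ is extensible, then for every $y\in X$ the graph $\Gamma^y$ is extensible, and the parameters of $\Gamma^x$ and $\Gamma^y$ are equal.
   Context: A finite simple graph $(\Lambda,Y)$ is extensible with parameters $(t,s,\bar s)$ (nonnegative integers) if: (1) $\Lambda$ has diameter $2$; (2) for every $y\in Y$, with $\Lambda(y,d)$ the set of vertices at distance $d$ from $y$: (a) $|\Lambda(y,1)|=2s$; (b) $|\Lambda(y,2)|=2\bar s$; (c) every $z\in\Lambda(y,1)$ is adjacent to exactly $\bar s$ points of $\Lambda(y,2)$ and exactly $t=2s-\bar s-1$ points of $\Lambda(y,1)$; (d) every $z\in\Lambda(y,2)$ is adjacent to exactly $s$ points of $\Lambda(y,2)$ and exactly $s$ points of $\Lambda(y,1)$; (3) every edge lies in exactly $t$ triangles; (4) $|Y|=1+2s+2\bar s$. The matrix of a graph on $X$ has entry $-1$ at $(i,j)$ if $i\ne j$ are adjacent and $1$ otherwise; two graphs with matrices $\mathcal{E},\mathcal{E}'$ are associated if $\varepsilon'_{i,j}=\nu_i\nu_j\varepsilon_{i,j}$ for some $\nu_i\in\{\pm1\}$. ${}^x\Gamma$ is the unique graph associated to $\Gamma$ in which $x$ is isolated, and $\Gamma^x$ is the graph induced by ${}^x\Gamma$ on $X\setminus\{x\}$. *)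

From mathcomp Require Import all_boot.
Set Implicit Arguments. Unset Strict Implicit. Unset Printing Implicit Defensive.

Definition simple_graph (V : finType) (e : rel V) : Prop :=
  symmetric e /\ irreflexive e.

Section Ext.
Variables (V : finType) (e : rel V).

Definition nbhd1 (y : V) : {set V} := [set z | e y z].
Definition nbhd2 (y : V) : {set V} :=
  [set z | [&& z != y, ~~ e y z & [exists w, e y w && e w z]]].

Definition diameter2 : Prop :=
  (forall y z : V, y != z -> e y z \/ exists w, e y w && e w z) /\
  (exists y z : V, z \in nbhd2 y).

Definition extensible_with (t s sb : nat) : Prop :=
  [/\ diameter2,
      (forall y : V,
         [/\ #|nbhd1 y| = 2 * s,
             #|nbhd2 y| = 2 * sb,
             t + sb + 1 = 2 * s,
             (forall z, z \in nbhd1 y ->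
                #|nbhd2 y :&: nbhd1 z| = sb /\ #|nbhd1 y :&: nbhd1 z| = t) &
             (forall z, z \in nbhd2 y ->
                #|nbhd2 y :&: nbhd1 z| = s /\ #|nbhd1 y :&: nbhd1 z| = s)]),
      (forall y z : V, e y z -> #|[set w | e y w && e z w]| = t) &
      #|V| = 1 + 2 * s + 2 * sb].

Definition extensible : Prop := exists t s sb, extensible_with t s sb.
End Ext.
Arguments extensible_with V e t s sb : clear implicits.
Arguments extensible V e : clear implicits.

(* Gamma^x: the graph induced on X \ {x} by the unique graph associated
   (by switching) to Gamma in which x is isolated.  With nu_i = eps_{x,i},
   eps'_{ij} = eps_{xi} eps_{xj} eps_{ij}, i.e. for i <> j:
   i ~' j  iff  (i~j) xor (x~i) xor (x~j). *)
Definition switch_del (T : finType) (e : rel T) (x : T) : rel {y : T | y != x} :=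
  fun i j => (val i != val j) &&
             (e (val i) (val j) (+) e x (val i) (+) e x (val j)).
Arguments switch_del {T} e x.

From mathcomp Require Import all_boot zify.
Set Implicit Arguments. Unset Strict Implicit. Unset Printing Implicit Defensive.

(* Extensibility of a graph with parameters (t, s, sb) amounts to strong
   regularity with degree 2s, lambda = t, mu = s on 1 + 2s + 2sb vertices,
   where t + sb + 1 = 2s: diameter 2 follows from mu > 0, and the counts
   involving the second neighbourhood follow by complementation.
   Since switching at x and then at y is switching at y, it remains to see
   that switching a graph which has x isolated and is strongly regular on
   X \ {x} with k = 2 mu, with respect to another vertex y, yields a graph of
   the same kind with y isolated.  In the switched graph the neighbourhood of
   a vertex u is the symmetric difference of the old neighbourhoods of u and y,
   or its complement; counting by inclusion-exclusion and using k = 2 mu and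
   lambda + sb + 1 = k returns the same parameters. *)

Lemma card_sum_lin (T : finType) (As Bs : seq {set T}) :
  (forall w : T, sumn [seq nat_of_bool (w \in A) | A : {set T} <- As] =
                 sumn [seq nat_of_bool (w \in B) | B : {set T} <- Bs]) ->
  sumn [seq #|A| | A : {set T} <- As] = sumn [seq #|B| | B : {set T} <- Bs].
Proof.
have sumE (Cs : seq {set T}) :
    sumn [seq #|C| | C : {set T} <- Cs] =
    \sum_w sumn [seq nat_of_bool (w \in C) | C : {set T} <- Cs].
  elim: Cs => [|C Cs IH] /=; first by rewrite big1.
  by rewrite IH big_split /= -sum1_card big_mkcond.
by move=> AB; rewrite !sumE; apply: eq_bigr => w _.
Qed.

Section Extensible.
Variables (V : finType) (e : rel V).
Hypotheses (e_sym : symmetric e) (e_irr : irreflexive e).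

Definition strongly_regular (k l m : nat) : Prop :=
  (forall y, #|nbhd1 e y| = k) /\
  (forall y z, y != z -> #|nbhd1 e y :&: nbhd1 e z| = if e y z then l else m).

Lemma srg_common_nbr k l m y z : strongly_regular k l m -> 0 < m ->
  y != z -> ~~ e y z -> exists w, e y w && e w z.
Proof.
move=> [_ srg_nbr] m_gt0 yz /negbTE eyz.
have /card_gt0P [w] : 0 < #|nbhd1 e y :&: nbhd1 e z| by rewrite srg_nbr // eyz.
by rewrite !inE (e_sym z) => yzw; exists w.
Qed.

Section Diameter2.
Hypothesis diam2 : forall y z, y != z -> ~~ e y z -> exists w, e y w && e w z.

Lemma nbhd2_setC y : nbhd2 e y = ~: (y |: nbhd1 e y).
Proof.
apply/setP => z; rewrite !inE negb_or.
case: (eqVneq z y) => [//|zy]; case eyz: (e y z) => //=.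
by apply/existsP; apply: diam2; rewrite ?eyz // eq_sym.
Qed.

Lemma card_nbhd2 y : #|nbhd2 e y| + #|nbhd1 e y| + 1 = #|V|.
Proof.
by rewrite nbhd2_setC -(cardsC (y |: nbhd1 e y)) cardsU1 inE e_irr; lia.
Qed.

Lemma card_nbhd2I y z :
  #|nbhd2 e y :&: nbhd1 e z| + #|nbhd1 e y :&: nbhd1 e z| + (z \in nbhd1 e y) =
  #|nbhd1 e z|.
Proof.
rewrite inE; case eyz: (e y z).
  have := @card_sum_lin _
    [:: nbhd2 e y :&: nbhd1 e z; nbhd1 e y :&: nbhd1 e z; [set y]] [:: nbhd1 e z].
  rewrite /= cards1 !addn0 addnA => -> // w; rewrite nbhd2_setC !inE /= !addn0.
  case: (eqVneq w y) => [->|_]; first by rewrite e_irr e_sym eyz.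
  by case: (e y w); case: (e z w).
have := @card_sum_lin _
  [:: nbhd2 e y :&: nbhd1 e z; nbhd1 e y :&: nbhd1 e z] [:: nbhd1 e z].
rewrite /= !addn0 => -> // w; rewrite nbhd2_setC !inE /= !addn0.
case: (eqVneq w y) => [->|_]; first by rewrite e_irr e_sym eyz.
by case: (e y w); case: (e z w).
Qed.
End Diameter2.

Lemma extensible_withE t s sb :
  extensible_with V e t s sb <->
  [/\ strongly_regular (2 * s) t s, #|V| = 1 + 2 * s + 2 * sb,
      t + sb + 1 = 2 * s & 0 < sb].
Proof.
split.
  case=> [[diam [y0 [z0 z0y0]]] deg tri cardV].
  have diam2 y z : y != z -> ~~ e y z -> exists w, e y w && e w z.
    by move=> /diam [->|[w yzw]] // _; exists w.
  have [_ n2y0 ts _ _] := deg y0.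
  have : 0 < #|nbhd2 e y0| by apply/card_gt0P; exists z0.
  rewrite n2y0 muln_gt0 => /andP[_ sb_gt0]; split=> //.
  split=> [y | y z yz]; first by have [] := deg y.
  case eyz: (e y z).
    by rewrite -(tri y z eyz); apply: eq_card => w; rewrite !inE.
  have [_ _ _ _ n2] := deg y; have [] := n2 z => //.
  by rewrite nbhd2_setC // !inE negb_or eq_sym yz eyz.
case=> [[deg nbr] cardV ts sb_gt0].
have diam2 y z : y != z -> ~~ e y z -> exists w, e y w && e w z.
  by apply: (@srg_common_nbr (2 * s) t s); [split | lia].
have card_n2 y : #|nbhd2 e y| = 2 * sb.
  by have := card_nbhd2 diam2 y; rewrite deg cardV; lia.
split=> //.
- split=> [y z yz | ].
    by case eyz: (e y z); [left | right; apply: diam2; rewrite ?eyz].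
  have [y _] : exists y, y \in V by apply/card_gt0P; rewrite cardV.
  have [z zy] : exists z, z \in nbhd2 e y by apply/card_gt0P; rewrite card_n2; lia.
  by exists y, z.
- move=> y; split=> // z z_y.
    have yz : y != z by apply: contraTneq z_y => <-; rewrite inE e_irr.
    have := card_nbhd2I diam2 y z; rewrite z_y deg nbr //.
    by move: z_y; rewrite inE => ->; lia.
  have := card_nbhd2I diam2 y z; move: z_y; rewrite nbhd2_setC // !inE negb_or.
  by case/andP=> zy /negbTE eyz; rewrite eyz deg nbr 1?eq_sym // eyz; lia.
- move=> y z eyz; have yz : y != z by apply: contraTneq eyz => <-; rewrite e_irr.
  have := nbr y z yz; rewrite eyz => <-.
  by apply: eq_card => w; rewrite !inE.
Qed.
End Extensible.

Section Restriction.
Variables (T : finType) (q : rel T) (x : T).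

Definition restrict : rel {z : T | z != x} := fun i j => q (val i) (val j).

Definition srg_off (k l m : nat) : Prop :=
  (forall u, u != x -> #|nbhd1 q u| = k) /\
  (forall u v, u != x -> v != x -> u != v ->
     #|nbhd1 q u :&: nbhd1 q v| = if q u v then l else m).

Lemma card_restrict_set (B : {set T}) :
  x \notin B -> #|[set j : {z : T | z != x} | val j \in B]| = #|B|.
Proof.
move=> xB; rewrite -(card_imset _ val_inj); apply: eq_card => w.
apply/imsetP/idP => [[j] | wB]; first by rewrite inE => jB ->.
have wx : w != x by apply: contraNneq xB => <-.
by exists (exist _ w wx); rewrite ?inE.
Qed.

Hypothesis q_x : forall u, q u x = false.

Lemma card_nbhd1_restrict i : #|nbhd1 restrict i| = #|nbhd1 q (val i)|.
Proof.
rewrite -card_restrict_set ?inE ?q_x //.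
by apply: eq_card => j; rewrite !inE.
Qed.

Lemma card_nbhd1I_restrict i j :
  #|nbhd1 restrict i :&: nbhd1 restrict j| = #|nbhd1 q (val i) :&: nbhd1 q (val j)|.
Proof.
rewrite -card_restrict_set ?inE ?q_x //.
by apply: eq_card => k; rewrite !inE.
Qed.

Lemma strongly_regular_restrict k l m :
  strongly_regular restrict k l m <-> srg_off k l m.
Proof.
split=> [[deg nbr] | [deg nbr]].
  split=> [u ux | u v ux vx uv].
    by rewrite -(deg (exist _ u ux)) card_nbhd1_restrict.
  by rewrite -(nbr (exist _ u ux) (exist _ v vx)) ?card_nbhd1I_restrict.
split=> [i | i j ij]; first by rewrite card_nbhd1_restrict deg ?(valP i).
by rewrite card_nbhd1I_restrict nbr ?(valP i) ?(valP j).
Qed.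
End Restriction.
Arguments restrict {T} q x _ _.

Section Switch.
Variables (T : finType) (e : rel T).

Definition switch (x : T) : rel T := fun i j => (i != j) && (e i j (+) e x i (+) e x j).

Lemma switch_irr x : irreflexive (switch x).
Proof. by move=> i; rewrite /switch eqxx. Qed.

Hypotheses (e_sym : symmetric e) (e_irr : irreflexive e).

Lemma switch_sym x : symmetric (switch x).
Proof. by move=> i j; rewrite /switch eq_sym e_sym -addbA (addbC (e x i)) addbA. Qed.

Lemma switchE x i j : switch x i j = e i j (+) e x i (+) e x j.
Proof. by rewrite /switch; case: (eqVneq i j) => [->|] //=; rewrite e_irr addFb addbb. Qed.

Lemma switch_isolated x j : switch x j x = false.
Proof. by rewrite switchE e_irr addbF (e_sym j) addbb. Qed.
End Switch.

Lemma switch_switch (T : finType) (e : rel T) x y :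
  irreflexive e -> switch (switch e x) y =2 switch e y.
Proof.
move=> e_irr u w; rewrite (switchE (@switch_irr _ e x)) !(switchE e_irr).
by case: (e u w); case: (e x u); case: (e x w); case: (e y u); case: (e y w); case: (e x y).
Qed.

Section Switching.
Variables (T : finType) (r : rel T) (x y : T) (t s sb : nat).
Hypotheses (r_sym : symmetric r) (r_irr : irreflexive r) (r_x : forall u, r u x = false).
Hypotheses (yx : y != x) (cardT : #|T| = 2 + 2 * s + 2 * sb) (ts : t + sb + 1 = 2 * s).
Hypothesis r_srg : srg_off r x (2 * s) t s.

Local Notation N := (nbhd1 r).
Local Notation N' := (nbhd1 (switch r y)).

Lemma nbhd1_switch_x : N' x = N y.
Proof. by apply/setP => w; rewrite !inE (switchE r_irr) (r_sym x) !r_x. Qed.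

Lemma switch_degree u : u != y -> #|N' u| = 2 * s.
Proof.
have [deg nbr] := r_srg.
case: (eqVneq u x) => [-> _|ux uy]; first by rewrite nbhd1_switch_x deg.
have := nbr y u yx ux; rewrite eq_sym uy => /(_ isT).
case ryu: (r y u) => Nyu.
  have : #|N' u| + #|N u| + #|N y| = #|T| + #|N y :&: N u| + #|N y :&: N u|.
    have := @card_sum_lin _ [:: N' u; N u; N y] [:: setT; N y :&: N u; N y :&: N u].
    rewrite /= cardsT !addn0 !addnA; apply=> w.
    by rewrite !inE !(switchE r_irr) ryu; case: (r u w); case: (r y w).
  by rewrite Nyu !deg //; lia.
have : #|N' u| + #|N y :&: N u| + #|N y :&: N u| = #|N u| + #|N y|.
  have := @card_sum_lin _ [:: N' u; N y :&: N u; N y :&: N u] [:: N u; N y].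
  rewrite /= !addn0 !addnA; apply=> w.
  by rewrite !inE !(switchE r_irr) ryu; case: (r u w); case: (r y w).
by rewrite Nyu !deg //; lia.
Qed.

Lemma switch_common_x v : v != y -> v != x ->
  #|N' x :&: N' v| = if switch r y x v then t else s.
Proof.
have [deg nbr] := r_srg.
move=> vy vx; have yv : y != v by rewrite eq_sym.
rewrite nbhd1_switch_x (switchE r_irr) (r_sym x) !r_x /=.
have := nbr y v yx vx yv; case ryv: (r y v) => Nyv.
  rewrite -Nyv; apply: eq_card => w.
  by rewrite !inE (switchE r_irr) ryv; case: (r v w); case: (r y w).
have : #|N y :&: N' v| + #|N y :&: N v| = #|N y|.
  have := @card_sum_lin _ [:: N y :&: N' v; N y :&: N v] [:: N y].
  rewrite /= !addn0; apply=> w.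
  by rewrite !inE (switchE r_irr) ryv; case: (r v w); case: (r y w).
by rewrite Nyv deg //; lia.
Qed.

Lemma switch_common u v : u != x -> v != x -> u != y -> v != y -> u != v ->
  #|N' u :&: N' v| = if switch r y u v then t else s.
Proof.
have [deg nbr] := r_srg.
move=> ux vx uy vy uv.
wlog ryvu : u v ux vx uy vy uv / r y v ==> r y u => [gen|].
  have [|] := boolP (r y v ==> r y u); first exact: gen.
  rewrite negb_imply => /andP[_ /negbTE ryu].
  by rewrite setIC switch_sym // gen // 1?eq_sym // ryu.
rewrite (switchE r_irr).
have := nbr y u yx ux; have := nbr y v yx vx; rewrite ![y == _]eq_sym uy vy.
move=> /(_ isT) Nyv /(_ isT) Nyu; have := nbr u v ux vx uv.
case ryu: (r y u) ryvu Nyu; case ryv: (r y v) Nyv => //= Nyv _ Nyu Nuv.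
- have : #|N' u :&: N' v| + #|N u| + #|N v| + #|N y| =
         #|T| + #|N u :&: N v| + #|N y :&: N u| + #|N y :&: N v|.
    have := @card_sum_lin _ [:: N' u :&: N' v; N u; N v; N y]
      [:: setT; N u :&: N v; N y :&: N u; N y :&: N v].
    rewrite /= cardsT !addn0 !addnA; apply=> w; rewrite !inE !(switchE r_irr) ryu ryv.
    by case: (r u w); case: (r v w); case: (r y w).
  by rewrite Nuv Nyu Nyv !deg // cardT; case: (r u v) => /=; lia.
- have : #|N' u :&: N' v| + #|N u :&: N v| + #|N y :&: N v| =
         #|N y :&: N u| + #|N v|.
    have := @card_sum_lin _ [:: N' u :&: N' v; N u :&: N v; N y :&: N v]
      [:: N y :&: N u; N v].
    rewrite /= !addn0 !addnA; apply=> w; rewrite !inE !(switchE r_irr) ryu ryv.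
    by case: (r u w); case: (r v w); case: (r y w).
  by rewrite Nuv Nyu Nyv !deg //; case: (r u v) => /=; lia.
have : #|N' u :&: N' v| + #|N y :&: N u| + #|N y :&: N v| =
       #|N u :&: N v| + #|N y|.
  have := @card_sum_lin _ [:: N' u :&: N' v; N y :&: N u; N y :&: N v]
    [:: N u :&: N v; N y].
  rewrite /= !addn0 !addnA; apply=> w; rewrite !inE !(switchE r_irr) ryu ryv.
  by case: (r u w); case: (r v w); case: (r y w).
by rewrite Nuv Nyu Nyv !deg //; case: (r u v) => /=; lia.
Qed.

Lemma switch_srg_off : srg_off (switch r y) y (2 * s) t s.
Proof.
split=> [u uy | u v uy vy uv]; first exact: switch_degree.
have [uxE | ux] := eqVneq u x.
  by subst u; apply: switch_common_x => //; rewrite eq_sym.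
have [vxE | vx] := eqVneq v x.
  by subst v; rewrite setIC switch_sym //; apply: switch_common_x.
exact: switch_common.
Qed.
End Switching.

Lemma eq_srg_off (T : finType) (q q' : rel T) x k l m :
  q =2 q' -> srg_off q x k l m -> srg_off q' x k l m.
Proof.
move=> qq'; have N_eq u : nbhd1 q u = nbhd1 q' u by apply/setP => w; rewrite !inE qq'.
case=> deg nbr; split=> [u | u v]; rewrite -!N_eq; first exact: deg.
by rewrite -qq'; apply: nbr.
Qed.

Lemma extensible_switch_delE (T : finType) (e : rel T) x t s sb :
  simple_graph e ->
  extensible_with _ (switch_del e x) t s sb <->
  [/\ srg_off (switch e x) x (2 * s) t s, #|T| = 2 + 2 * s + 2 * sb,
      t + sb + 1 = 2 * s & 0 < sb].
Proof.
case=> e_sym e_irr.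
have switch_x := switch_isolated e_sym e_irr x.
rewrite (_ : switch_del e x = restrict (switch e x) x) //.
rewrite extensible_withE; last 2 first.
- by move=> i j; apply: switch_sym.
- by move=> i; apply: switch_irr.
have srgE := strongly_regular_restrict switch_x (2 * s) t s.
have : 0 < #|T| by apply/card_gt0P; exists x.
rewrite card_sig cardC1.
by split=> -[/srgE srg cardT ts sb_gt0]; split=> //; lia.
Qed.

Theorem proposition5 (T : finType) (e : rel T) :
  simple_graph e -> 3 <= #|T| ->
  forall (x : T) (t s sb : nat),
    extensible_with _ (switch_del e x) t s sb ->
    forall y : T, extensible_with _ (switch_del e y) t s sb.
Proof.
move=> simple_e _ x t s sb /(extensible_switch_delE x t s sb simple_e).
case=> srg_x cardT ts sb_gt0 y; apply/(extensible_switch_delE y t s sb simple_e).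
split=> //; have [e_sym e_irr] := simple_e.
have [-> // | yx] := eqVneq y x.
apply: eq_srg_off (switch_switch x y e_irr) _.
exact: (switch_srg_off (switch_sym e_sym x) (switch_irr e x)
          (switch_isolated e_sym e_irr x) yx cardT ts srg_x).
Qed.
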